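(* Let $D$ be a finite archimedean division semialgebra over $\mathbb{Z}_\mathrm{max}$. Then $\mathrm{ui}(D/\mathbb{Z}_\mathrm{max})<\infty$.
   Context: A (possibly noncommutative) semiring has a commutative associative addition with identity $0$ and an associative multiplication with identity $1$, satisfying both distributive laws; a division semiring is one in which every nonzero element is invertible. $\mathbb{Z}_\mathrm{max}=\mathbb{Z}\cup\{-\infty\}$ is the semifield with addition $\max$ and multiplication ordinary addition. A division semialgebra over a semifield $K$ is a division semiring $D$ with an injective homomorphism from $K$ into the center of $D$ (identify $K$ with its image); it is finite if $D$ is finitely generated as a left $K$-semimodule. For idempotent $K$, $D$ is archimedean over $K$ if for every $x\in D$ there exists $y\in K$ with $x+y=y$. The unit index is $\mathrm{ui}(D/K)=|D^\times/K^\times|$. *)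

From HB Require Import structures.
From mathcomp Require Import all_boot all_order all_algebra.
Set Implicit Arguments. Unset Strict Implicit. Unset Printing Implicit Defensive.
Import Order.TTheory GRing.Theory Num.Theory.
Local Open Scope ring_scope.

(* The semifield Z_max = Z ∪ {-oo}: None is -oo, Some n is the integer n.
   Addition is max, multiplication is ordinary addition. *)
Definition Zmax := option int.
Definition zmax_zero : Zmax := None.
Definition zmax_one : Zmax := Some 0.
Definition zmax_add (a b : Zmax) : Zmax :=
  match a, b with
  | None, _ => b
  | _, None => a
  | Some x, Some y => Some (Num.max x y)
  end.
Definition zmax_mul (a b : Zmax) : Zmax :=
  match a, b with
  | Some x, Some y => Some (x + y)
  | _, _ => None
  end.

Definition is_unit (D : pzSemiRingType) (x : D) : Prop :=
  exists y : D, x * y = 1 /\ y * x = 1.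

Definition division_semiring (D : pzSemiRingType) : Prop :=
  forall x : D, x <> 0 -> is_unit x.

Definition central_embedding (D : pzSemiRingType) (iota : Zmax -> D) : Prop :=
  injective iota /\
  iota zmax_zero = 0 /\ iota zmax_one = 1 /\
  (forall a b, iota (zmax_add a b) = iota a + iota b) /\
  (forall a b, iota (zmax_mul a b) = iota a * iota b) /\
  (forall a (x : D), iota a * x = x * iota a).

Definition finite_over (D : pzSemiRingType) (iota : Zmax -> D) : Prop :=
  exists gens : seq D, forall x : D,
    exists c : 'I_(size gens) -> Zmax,
      x = \sum_(i < size gens) iota (c i) * gens`_i.

Definition archimedean_over (D : pzSemiRingType) (iota : Zmax -> D) : Prop :=
  forall x : D, exists y : Zmax, x + iota y = iota y.

Definition same_coset (D : pzSemiRingType) (iota : Zmax -> D) (u v : D) : Prop :=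
  exists k : Zmax, k <> zmax_zero /\ u = v * iota k.

(* ui(D/K) = |D^x / K^x| is finite: finitely many cosets of K^x in D^x. *)
Definition finite_unit_index (D : pzSemiRingType) (iota : Zmax -> D) : Prop :=
  exists reps : seq D,
    (forall v, v \in reps -> is_unit v) /\
    (forall u : D, is_unit u -> exists2 v, v \in reps & same_coset iota u v).

From mathcomp Require Import all_boot all_order all_algebra zify.
From Stdlib Require Import ClassicalEpsilon.
Import Order.TTheory GRing.Theory Num.Theory.
Local Open Scope ring_scope.

(* Since 1 + 1 = 1 in Z_max, D is idempotent and x <= y :<-> x + y = y is an
   order compatible with sums and products.  Each nonzero generator g_i lies
   between iota v_i and iota (v_i + S) for a uniform S: above by the archimedean
   property, below by inverting an upper bound of g_i^-1.  Hence so does every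
   nonzero combination, and every unit u can be rescaled by K^x to satisfy
   1 <= u <= iota S.  In an expansion of such u, no coefficient exceeds S - v_i,
   and coefficients below -(v_i + S) may be raised to -(v_i + S) without changing
   the sum.  So u is a combination with coefficients in a fixed finite set. *)

Definition sle (D : pzSemiRingType) (x y : D) := x + y = y.
Arguments sle {D}.

Section IdempotentOrder.
Context {D : pzSemiRingType}.
Hypothesis addrr : forall x : D, x + x = x.
Implicit Types x y z : D.

Lemma sle_refl x : sle x x. Proof. exact: addrr. Qed.

Lemma sle_trans {x y z} : sle x y -> sle y z -> sle x z.
Proof. by rewrite /sle => xy yz; rewrite -yz addrA xy. Qed.

Lemma sle_anti {x y} : sle x y -> sle y x -> x = y.
Proof. by rewrite /sle => xy yx; rewrite -xy addrC. Qed.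

Lemma sle0r x : sle 0 x. Proof. exact: add0r. Qed.

Lemma sle_addl x y : sle x (x + y). Proof. by rewrite /sle addrA addrr. Qed.

Lemma sle_addr x y : sle y (x + y). Proof. by rewrite addrC; apply: sle_addl. Qed.

Lemma sle_join {x y z} : sle x z -> sle y z -> sle (x + y) z.
Proof. by rewrite /sle => xz yz; rewrite -addrA yz xz. Qed.

Lemma sle_add {x1 y1 x2 y2} : sle x1 y1 -> sle x2 y2 -> sle (x1 + x2) (y1 + y2).
Proof.
move=> le1 le2; apply: sle_join.
  exact: sle_trans le1 (sle_addl _ _).
exact: sle_trans le2 (sle_addr _ _).
Qed.

Lemma sle_mul2l z {x y} : sle x y -> sle (z * x) (z * y).
Proof. by rewrite /sle => xy; rewrite -mulrDr xy. Qed.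

Lemma sle_mul2r z {x y} : sle x y -> sle (x * z) (y * z).
Proof. by rewrite /sle => xy; rewrite -mulrDl xy. Qed.

Lemma sle_sum {n} (F G : 'I_n -> D) :
  (forall i, sle (F i) (G i)) -> sle (\sum_i F i) (\sum_i G i).
Proof.
move=> FG; apply: (big_ind2 sle); [exact: sle_refl | move=> *; exact: sle_add |].
by move=> i _; apply: FG.
Qed.

Lemma sle_sum_bound {n} (F : 'I_n -> D) x :
  (forall i, sle (F i) x) -> sle (\sum_i F i) x.
Proof.
move=> Fx; apply: (big_ind (fun y => sle y x)); [exact: sle0r | move=> *; exact: sle_join |].
by move=> i _; apply: (Fx i).
Qed.

Lemma sle_sum_term {n} (F : 'I_n -> D) i : sle (F i) (\sum_i F i).
Proof. by rewrite (bigD1 i) //=; apply: sle_addl. Qed.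

Lemma sum_sandwich {n} {F G : 'I_n -> D} {x} :
  x = \sum_i F i -> (forall i, sle (F i) (G i) /\ sle (G i) x) -> x = \sum_i G i.
Proof.
move=> xF FGx; apply: sle_anti.
  by rewrite {1}xF; apply: sle_sum => i; case: (FGx i).
by apply: sle_sum_bound => i; case: (FGx i).
Qed.

End IdempotentOrder.

Lemma is_unitM (D : pzSemiRingType) (u v : D) :
  is_unit u -> is_unit v -> is_unit (u * v).
Proof.
move=> [u' [uu' u'u]] [v' [vv' v'v]]; exists (v' * u'); split.
  by rewrite mulrA -(mulrA u) vv' mulr1.
by rewrite mulrA -(mulrA v') u'u mulr1.
Qed.

Lemma finite_unit_index_of_cover (D : pzSemiRingType) (iota : Zmax -> D)
    (s : seq D) :
  (forall u, is_unit u -> exists2 v, v \in s & is_unit v /\ same_coset iota u v) ->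
  finite_unit_index iota.
Proof.
move=> cover.
pose unitb (v : D) : bool := excluded_middle_informative (is_unit v).
exists [seq v <- s | unitb v]; split.
  by move=> v; rewrite mem_filter /unitb; case: excluded_middle_informative.
move=> u /cover [v vs [vU uv]]; exists v => //.
by rewrite mem_filter vs andbT /unitb; case: excluded_middle_informative.
Qed.

Lemma ord_fun_ubound {n} (f : 'I_n -> int) : exists B : nat, forall i, f i <= B%:Z.
Proof.
exists (\max_i `|f i|%N) => i; apply: le_trans (ler_norm (f i)) _.
by rewrite -abszE lez_nat; apply: leq_bigmax.
Qed.

Definition window (B : nat) : seq Zmax :=
  None :: [seq Some (i%:Z - B%:Z) | i <- iota 0 (B + B).+1].

Lemma mem_window B k : `|k| <= B%:Z -> Some k \in window B.
Proof.
move=> kB; rewrite inE; apply/orP; right; apply/mapP.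
by exists (absz (k + B%:Z)); [rewrite mem_iota; lia | congr Some; lia].
Qed.

Section CentralEmbedding.
Context {D : pzSemiRingType} {iota : Zmax -> D}.
Hypothesis hemb : central_embedding iota.

Lemma emb0 : iota None = 0. Proof. by case: hemb => _ []. Qed.
Lemma emb1 : iota (Some 0) = 1. Proof. by case: hemb => _ [_ []]. Qed.
Lemma emb_central a (x : D) : iota a * x = x * iota a.
Proof. by case: hemb => _ [_ [_ [_ []]]]. Qed.

Lemma embSD a b : iota (Some a) + iota (Some b) = iota (Some (Num.max a b)).
Proof. by case: hemb => _ [_ [_ [embD _]]]; rewrite -embD. Qed.

Lemma embSM a b : iota (Some a) * iota (Some b) = iota (Some (a + b)).
Proof. by case: hemb => _ [_ [_ [_ [embM _]]]]; rewrite -embM. Qed.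

Lemma mulr_embSK a (x : D) : x * iota (Some a) * iota (Some (- a)) = x.
Proof. by rewrite -mulrA embSM addrN emb1 mulr1. Qed.

(* Idempotency of [max] in Z_max propagates to all of [D] through [1 + 1 = 1]. *)
Lemma addrr (x : D) : x + x = x.
Proof. by rewrite -[x]mulr1 -mulrDr -emb1 embSD maxxx. Qed.

Lemma sle_embS a b : sle (iota (Some a)) (iota (Some b)) <-> a <= b.
Proof.
rewrite /sle embSD; split; last by move/max_idPr->.
by move/hemb.1 => [/max_idPr].
Qed.

Lemma is_unit_embS a : is_unit (iota (Some a)).
Proof. by exists (iota (Some (- a))); rewrite !embSM addrN addNr emb1. Qed.

Lemma unit_neq0 {u : D} : is_unit u -> u <> 0.
Proof.
move=> [v [uv _]] u0; have := hemb.1 (Some 0) None.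
by rewrite emb1 emb0 -uv u0 mul0r => /(_ erefl).
Qed.

Hypothesis harch : archimedean_over iota.

Lemma sle_embS_of_neq0 {x : D} : x <> 0 -> exists W, sle x (iota (Some W)).
Proof.
move=> x0; have [[W|] xW] := harch x; first by exists W.
by move: xW; rewrite emb0 addr0.
Qed.

(* The lower bound is the inverse of an upper bound of [u^-1]. *)
Lemma unit_between (u : D) : is_unit u ->
  exists v W, sle (iota (Some v)) u /\ sle u (iota (Some W)).
Proof.
move=> uU; have [W uW] := sle_embS_of_neq0 (unit_neq0 uU).
have [u' [uu' u'u]] := uU.
have [m u'm] : exists m, sle u' (iota (Some m)).
  by apply: sle_embS_of_neq0; apply: unit_neq0; exists u.
exists (- m), W; split => //.
have := sle_mul2l u (sle_mul2r (iota (Some (- m))) u'm).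
by rewrite mulrA uu' mul1r mulrA mulr_embSK.
Qed.

End CentralEmbedding.

Section Generators.
Context {D : pzSemiRingType} {iota : Zmax -> D} {gens : seq D}.
Hypothesis hemb : central_embedding iota.
Local Notation n := (size gens).
Local Notation comb c := (\sum_(i < n) iota (c i) * gens`_i).

Definition band (S : nat) (a : int) (x : D) :=
  sle (iota (Some a)) x /\ sle x (iota (Some (a + S%:Z))).

Lemma band_embSM {S a x} b : band S a x -> band S (b + a) (iota (Some b) * x).
Proof.
move=> [lo up]; split; first by rewrite -(embSM hemb); apply: sle_mul2l.
by rewrite -addrA -(embSM hemb); apply: sle_mul2l.
Qed.

Lemma band_add {S a b x y} :
  band S a x -> band S b y -> band S (Num.max a b) (x + y).
Proof.
move=> [lox upx] [loy upy]; split.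
  by rewrite -(embSD hemb); exact: (sle_add (addrr hemb) lox loy).
apply: (sle_trans (sle_add (addrr hemb) upx upy)).
by rewrite (embSD hemb); apply/(sle_embS hemb); lia.
Qed.

Lemma gens_band : division_semiring D -> archimedean_over iota ->
  exists (v : 'I_n -> int) (S : nat), forall i : 'I_n, gens`_i = 0 \/ band S (v i) gens`_i.
Proof.
move=> hdiv harch.
have bounds (i : 'I_n) : exists vW : int * int, gens`_i = 0 \/
    sle (iota (Some vW.1)) gens`_i /\ sle gens`_i (iota (Some vW.2)).
  have [g0 | /hdiv/(unit_between hemb harch) [v [W vgW]]] := classic (gens`_i = 0).
    by exists (0, 0); left.
  by exists (v, W); right.
have [vW hvW] := fin_all_exists bounds.
have [S hS] := ord_fun_ubound (fun i => (vW i).2 - (vW i).1).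
exists (fun i => (vW i).1), S => i.
case: (hvW i) => [g0 | [lo up]]; [by left | right; split => //].
by apply: (sle_trans up); apply/(sle_embS hemb); have := hS i; lia.
Qed.

Section Band.
Context {v : 'I_n -> int} {S : nat}.
Hypothesis hband : forall i : 'I_n, gens`_i = 0 \/ band S (v i) gens`_i.

Lemma comb_band c : comb c = 0 \/ exists a, band S a (comb c).
Proof.
apply: (big_ind (fun x => x = 0 \/ exists a, band S a x)); first by left.
  move=> x y [-> | [a xa]]; first by rewrite add0r.
  move=> [-> | [b yb]]; first by rewrite addr0; right; exists a.
  by right; exists (Num.max a b); apply: band_add.
move=> i _; case: (c i) => [k|]; last by left; rewrite (emb0 hemb) mul0r.
case: (hband i) => [-> | gi]; first by left; rewrite mulr0.
by right; exists (k + v i); apply: band_embSM.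
Qed.

(* Coefficients below [-(v + S)] contribute less than [1 <= x], so they may be
   raised to [-(v + S)]; those above [S - v] would exceed [x]. *)
Lemma truncate_coefficient {B w g x k} :
  band S w g -> `|w| + S%:Z <= B%:Z -> band S 0 x ->
  sle (iota (Some k) * g) x ->
  exists2 c, c \in window B &
    sle (iota (Some k) * g) (iota c * g) /\ sle (iota c * g) x.
Proof.
move=> [lo up] wB [x1 xS] kgx.
have kw : k + w <= S%:Z.
  apply/(sle_embS hemb); rewrite -(embSM hemb).
  apply: sle_trans (sle_mul2l _ lo) _; apply: sle_trans kgx _.
  by rewrite add0r in xS.
have [small | big] := lerP k (- (w + S%:Z)).
  exists (Some (- (w + S%:Z))); first by apply: mem_window; lia.
  split; first by apply: sle_mul2r; apply/(sle_embS hemb).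
  apply: sle_trans (sle_mul2l _ up) _.
  by rewrite (embSM hemb) addNr.
exists (Some k); first by apply: mem_window; lia.
by split; first apply: sle_refl (addrr hemb) _.
Qed.

Lemma window_coefficients {B c x} :
  (forall i, `|v i| + S%:Z <= B%:Z) -> band S 0 x -> x = comb c ->
  exists c', (forall i, c' i \in window B) /\ x = comb c'.
Proof.
move=> vB x01 xc.
have raise (i : 'I_n) : exists2 c', c' \in window B &
    sle (iota (c i) * gens`_i) (iota c' * gens`_i) /\ sle (iota c' * gens`_i) x.
  have term : sle (iota (c i) * gens`_i) x.
    by rewrite xc; exact: (sle_sum_term (addrr hemb) (fun j => iota (c j) * gens`_j)).
  have zero_term : sle (0 : D) 0 /\ sle 0 x.
    by split; [exact: sle_refl (addrr hemb) _ | exact: sle0r].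
  case: (hband i) => [g0 | gi].
    by exists None; rewrite ?inE // g0 !mulr0.
  case ci: (c i) => [k|]; last by exists None; rewrite ?inE // (emb0 hemb) !mul0r.
  by apply: (truncate_coefficient gi (vB i) x01); rewrite -ci.
have [c' c'B c'x] := fin_all_exists2 raise.
by exists c'; split => //; exact: (sum_sandwich (addrr hemb) xc c'x).
Qed.

End Band.

Lemma finite_unit_index_of_coefficients (cs : seq Zmax) :
  (forall u, is_unit u -> exists a (c : 'I_n -> Zmax),
     (forall i, c i \in cs) /\ iota (Some a) * u = comb c) ->
  finite_unit_index iota.
Proof.
move=> hcs.
pose coef := {ffun 'I_n -> 'I_(size cs)}.
apply: (@finite_unit_index_of_cover D iota
  [seq comb (fun i => nth None cs (F i)) | F : coef <- enum coef]).
move=> u uU; have [a [c [ccs auc]]] := hcs u uU.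
exists (iota (Some a) * u); last split.
- rewrite auc; apply/mapP.
  exists [ffun i => Ordinal (etrans (index_mem (c i) cs) (ccs i))]; first by rewrite mem_enum.
  by apply: eq_bigr => i _; rewrite ffunE nth_index.
- by apply: is_unitM uU; apply: is_unit_embS.
- exists (Some (- a)); split => //.
  by rewrite (emb_central hemb) mulr_embSK.
Qed.

End Generators.
Arguments band {D} iota S a x.

Theorem mainTheorem14 (D : pzSemiRingType) (iota : Zmax -> D)
  (hdiv : division_semiring D)
  (hemb : central_embedding iota)
  (hfin : finite_over iota)
  (harch : archimedean_over iota) :
  finite_unit_index iota.
Proof.
have [gens hgens] := hfin.
have [v [S hband]] := gens_band (gens := gens) hemb hdiv harch.
have [B vB] := ord_fun_ubound (fun i => `|v i| + S%:Z).
apply: (finite_unit_index_of_coefficients (gens := gens) hemb (window B)) => u uU.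
have [c uc] := hgens u.
have [u0 | [a ua]] := comb_band hemb hband c.
  by case: (unit_neq0 hemb uU); rewrite uc.
have := band_embSM hemb (- a) ua; rewrite addNr -uc => ua'.
have [c' uc'] := hgens (iota (Some (- a)) * u).
have [c'' [c''B uc'']] := window_coefficients hemb hband vB ua' uc'.
by exists (- a), c''.
Qed.
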